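(* Under the standing setup, the difference in group means satisfies $$D=\frac{\delta_B+\delta_W}{(1-\gamma)\,\mathrm{Var}(X)} .$$ (In particular $0\le\gamma<1$, and $D$ has the same sign as $\delta_B+\delta_W$.)
   Context: Let $(X,Y,N)$ be a random triple with $X\in\{0,1\}$ (group membership), $Y$ a real-valued outcome, and $N$ taking values in a finite set $\mathcal N$ (neighborhoods). Write $p_n=\Pr(N=n)$, $X_n=\mathbb E[X\mid N=n]$, $Y_n=\mathbb E[Y\mid N=n]$, and let $X_N=\mathbb E[X\mid N]$, $Y_N=\mathbb E[Y\mid N]$ denote the corresponding random variables. Assume there exists $n\in\mathcal N$ with $p_n>0$ and $X_n\in(0,1)$. Fix reals $\underline Y\le\overline Y$ and assume $Y_n^x:=\mathbb E[Y\mid X=x,N=n]\in[\underline Y,\overline Y]$ whenever $\Pr(X=x,N=n)>0$. Group means: $Y^x=\mathbb E[Y\mid X=x]$ for $x\in\{0,1\}$, and $D=Y^1-Y^0$. Between-group association: $\delta_B=\mathbb E[\mathrm{Cov}(Y,X\mid N)]$. Within-group association: $\delta_W=\mathbb E[\mathrm{Cov}(Y,X_N\mid X)]$. Aggregation ratio: $\gamma=\mathrm{Var}(X_N)/\mathrm{Var}(X)$. *)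

(* a general probability space (T, P) carrying
   X : T -> bool (group), Y : T -> R (outcome), N : T -> I (neighbourhood, I finite). *)
From mathcomp Require Import all_boot all_order all_algebra.
From mathcomp Require Import all_classical all_reals all_analysis.
Set Implicit Arguments. Unset Strict Implicit. Unset Printing Implicit Defensive.
Import Order.TTheory GRing.Theory Num.Theory.
Local Open Scope classical_set_scope.
Local Open Scope ring_scope.

(* Expectation of a real random variable (meaningful when integrable). *)
Definition Ex d (T : measurableType d) (R : realType) (P : probability T R)
  (f : T -> R) : R := fine (\int[P]_(w in setT) (f w)%:E).

Definition Pr d (T : measurableType d) (R : realType) (P : probability T R)
  (A : set T) : R := fine (P A).

Definition condE d (T : measurableType d) (R : realType) (P : probability T R)
  (f : T -> R) (A : set T) : R :=
  Ex P (fun w => f w * (\1_A w)) / Pr P A.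

Definition condCov d (T : measurableType d) (R : realType) (P : probability T R)
  (f g : T -> R) (A : set T) : R :=
  condE P (fun w => f w * g w) A - condE P f A * condE P g A.

Definition Var d (T : measurableType d) (R : realType) (P : probability T R)
  (f : T -> R) : R := Ex P (fun w => f w ^+ 2) - (Ex P f) ^+ 2.

Section Setup.
Context d (T : measurableType d) (R : realType) (P : probability T R)
  (I : finType) (X : T -> bool) (Y : T -> R) (N : T -> I).

Definition Xr : T -> R := fun w => (X w)%:R.
Definition evN (n : I) : set T := [set w | N w = n].
Definition evX (x : bool) : set T := [set w | X w = x].
Definition evXN (x : bool) (n : I) : set T := [set w | X w = x /\ N w = n].

Definition p_ (n : I) : R := Pr P (evN n).
Definition X_ (n : I) : R := condE P Xr (evN n).
Definition Y_ (n : I) : R := condE P Y (evN n).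
Definition XN : T -> R := fun w => X_ (N w).
Definition YN : T -> R := fun w => Y_ (N w).
Definition Ycell (x : bool) (n : I) : R := condE P Y (evXN x n).
Definition Ygrp (x : bool) : R := condE P Y (evX x).
Definition Dgap : R := Ygrp true - Ygrp false.

Definition deltaB : R := Ex P (fun w => condCov P Y Xr (evN (N w))).
Definition deltaW : R := Ex P (fun w => condCov P Y XN (evX (X w))).
Definition gammaR : R := Var P XN / Var P Xr.
End Setup.

(* Every quantity in the statement is a function of the cell masses
   q x n = P(X = x, N = n) and m x n = E[Y; X = x, N = n].  In these terms
   delta_B + delta_W = B * D with B = sum_n X_n P(X = 0, N = n) = E[Var(X | N)],
   and by the law of total variance Var X - Var X_N = B as well, so
   D = (delta_B + delta_W) / ((1 - gamma) Var X).  A mixed neighbourhood makes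
   B > 0, which gives gamma < 1 and the sign statement. *)

From mathcomp Require Import all_boot all_order all_algebra.
From mathcomp Require Import all_classical all_reals all_analysis.
From mathcomp Require Import measurable_realfun.
From mathcomp Require Import ring lra.
Set Implicit Arguments. Unset Strict Implicit. Unset Printing Implicit Defensive.
Import Order.TTheory GRing.Theory Num.Theory.
Local Open Scope classical_set_scope.
Local Open Scope ring_scope.

Lemma sqr_weighted_mean_le (R : realFieldType) (I : finType) (w f : I -> R) :
  (forall i, 0 <= w i) -> \sum_i w i = 1 ->
  (\sum_i f i * w i) ^+ 2 <= \sum_i f i ^+ 2 * w i.
Proof.
move=> w_ge0 w_sum1; set mu := \sum_i f i * w i.
have -> : \sum_i f i ^+ 2 * w i = \sum_i (f i - mu) ^+ 2 * w i + mu ^+ 2.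
  have -> : \sum_i (f i - mu) ^+ 2 * w i
          = \sum_i (f i ^+ 2 * w i - 2 * mu * (f i * w i) + mu ^+ 2 * w i).
    by apply: eq_bigr => i _; ring.
  rewrite big_split sumrB /= -!mulr_sumr w_sum1 -/mu; ring.
rewrite lerDr; apply: sumr_ge0 => i _; exact: mulr_ge0 (sqr_ge0 _) (w_ge0 i).
Qed.

Lemma gap_ratio (R : realFieldType) (D S VX VXN : R) :
  0 <= VXN -> VXN < VX -> S = (VX - VXN) * D ->
  D = S / ((1 - VXN / VX) * VX) /\ 0 <= VXN / VX /\ VXN / VX < 1
  /\ Num.sg D = Num.sg S.
Proof.
move=> VXN_ge0 VXN_lt ->.
have VX_gt0 : 0 < VX by apply: le_lt_trans VXN_lt.
have W_gt0 : 0 < VX - VXN by rewrite subr_gt0.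
have -> : (1 - VXN / VX) * VX = VX - VXN by rewrite mulrBl mul1r divfK ?gt_eqF.
split; first by rewrite mulrC mulKf ?gt_eqF.
split; first exact: divr_ge0 VXN_ge0 (ltW VX_gt0).
split; first by rewrite ltr_pdivrMr // mul1r.
by rewrite sgrM (gtr0_sg W_gt0) mul1r.
Qed.

Section CellAlgebra.
Variables (R : realFieldType) (I : finType) (q m : bool -> I -> R).

(* [cellP n], [cellX n], [groupQ x], [groupM x] stand for p_n, X_n, P(X = x),
   E[Y; X = x]; [covN n] and [covX x] are Cov(Y, X | N = n) and
   Cov(Y, X_N | X = x). *)

Definition cellP n := q true n + q false n.
Definition cellX n := q true n / cellP n.
Definition groupQ x := \sum_n q x n.
Definition groupM x := \sum_n m x n.
Definition covN n := m true n / cellP n - (m true n + m false n) / cellP n * cellX n.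
Definition covX x := (\sum_n cellX n * m x n) / groupQ x
  - groupM x / groupQ x * ((\sum_n cellX n * q x n) / groupQ x).
Definition gapC := groupM true / groupQ true - groupM false / groupQ false.
Definition deltaBC := \sum_n covN n * cellP n.
Definition deltaWC := \sum_x covX x * groupQ x.
Definition varXC := groupQ true - groupQ true ^+ 2.
Definition varXNC := \sum_n cellX n ^+ 2 * cellP n - (\sum_n cellX n * cellP n) ^+ 2.

Hypothesis q_ge0 : forall x n, 0 <= q x n.
Hypothesis m_eq0 : forall x n, q x n = 0 -> m x n = 0.
Hypothesis groupQ_sum1 : groupQ true + groupQ false = 1.
Hypothesis mixed_cell : exists n, 0 < cellP n /\ 0 < cellX n /\ cellX n < 1.

Lemma cellP_ge0 n : 0 <= cellP n.
Proof. exact: addr_ge0. Qed.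

(* Also true when [cellP n = 0], where [cellX n] is the junk value [0]. *)
Lemma cellXP n : cellX n * cellP n = q true n.
Proof.
have [P0|P_neq0] := eqVneq (cellP n) 0; last by rewrite divfK.
have := q_ge0 true n; have := q_ge0 false n.
by rewrite P0 mulr0; move: P0; rewrite /cellP; lra.
Qed.

Lemma groupQ_split : groupQ true = \sum_n cellX n * q true n + \sum_n cellX n * q false n.
Proof.
rewrite -big_split /=; apply: eq_bigr => n _.
by rewrite -mulrDr -/(cellP n) cellXP.
Qed.

Lemma mixed_cell_pos : exists n, 0 < cellX n /\ 0 < q true n /\ 0 < q false n.
Proof.
have [n [P_gt0 [X_gt0 X_lt1]]] := mixed_cell; exists n.
have q1_gt0 : 0 < q true n by rewrite -cellXP mulr_gt0.
have : 0 < (1 - cellX n) * cellP n by rewrite mulr_gt0 // subr_gt0.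
by rewrite mulrBl mul1r cellXP /cellP; split => //; split => //; lra.
Qed.

Lemma groupQ_gt0 x : 0 < groupQ x.
Proof.
have [n [_ [q1_gt0 q0_gt0]]] := mixed_cell_pos.
have qn_gt0 : 0 < q x n by case: x.
have rest_ge0 : 0 <= \sum_(k | k != n) q x k by exact: sumr_ge0.
by rewrite /groupQ (bigD1 n) //=; lra.
Qed.

Lemma within_var_gt0 : 0 < \sum_n cellX n * q false n.
Proof.
have [n [X_gt0 [_ q0_gt0]]] := mixed_cell_pos.
have Bn_gt0 : 0 < cellX n * q false n by exact: mulr_gt0.
have rest_ge0 : 0 <= \sum_(k | k != n) cellX k * q false k.
  by apply: sumr_ge0 => k _; rewrite mulr_ge0 ?divr_ge0 ?cellP_ge0.
by rewrite (bigD1 n) //=; lra.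
Qed.

Lemma varXNC_eq : varXNC = \sum_n cellX n * q true n - groupQ true ^+ 2.
Proof.
rewrite /varXNC; congr (_ - _ ^+ 2); apply: eq_bigr => n _.
  by rewrite expr2 -mulrA cellXP.
exact: cellXP.
Qed.

Lemma varXNC_ge0 : 0 <= varXNC.
Proof.
rewrite subr_ge0; apply: sqr_weighted_mean_le; first exact: cellP_ge0.
by rewrite big_split.
Qed.

Lemma within_var : varXC - varXNC = \sum_n cellX n * q false n.
Proof. rewrite varXNC_eq /varXC groupQ_split; ring. Qed.

Lemma deltaBC_eq : deltaBC = \sum_n (m true n - cellX n * (m true n + m false n)).
Proof.
apply: eq_bigr => n _.
have [P0|P_neq0] := eqVneq (cellP n) 0.
  have [q1_0 q0_0] : q true n = 0 /\ q false n = 0.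
    by have := q_ge0 true n; have := q_ge0 false n; move: P0; rewrite /cellP; lra.
  by rewrite P0 (m_eq0 q1_0) (m_eq0 q0_0); ring.
by rewrite /covN; field.
Qed.

Lemma deltaWC_eq : deltaWC = \sum_x (\sum_n cellX n * m x n
  - groupM x * (\sum_n cellX n * q x n) / groupQ x).
Proof.
apply: eq_bigr => x _; have Q_neq0 := lt0r_neq0 (groupQ_gt0 x).
by rewrite /covX; field.
Qed.

Lemma deltaBWC : deltaBC + deltaWC = (\sum_n cellX n * q false n) * gapC.
Proof.
have Q1_gt0 := groupQ_gt0 true; have Q0_gt0 := groupQ_gt0 false.
have B1_eq : \sum_n cellX n * q true n = groupQ true - \sum_n cellX n * q false n.
  by rewrite groupQ_split; ring.
rewrite deltaBC_eq deltaWC_eq big_bool /=.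
have -> : \sum_n (m true n - cellX n * (m true n + m false n))
          = groupM true - \sum_n cellX n * m true n - \sum_n cellX n * m false n.
  by rewrite /groupM -!sumrB; apply: eq_bigr => n _; ring.
rewrite B1_eq /gapC.
by field; rewrite !gt_eqF.
Qed.

Theorem cell_gap_ratio :
  gapC = (deltaBC + deltaWC) / ((1 - varXNC / varXC) * varXC)
  /\ 0 <= varXNC / varXC /\ varXNC / varXC < 1
  /\ Num.sg gapC = Num.sg (deltaBC + deltaWC).
Proof.
apply: gap_ratio; first exact: varXNC_ge0.
  by rewrite -subr_gt0 within_var within_var_gt0.
by rewrite within_var deltaBWC.
Qed.

End CellAlgebra.

Section Expectation.
Context d (T : measurableType d) (R : realType) (P : probability T R).

Lemma eq_Ex (f g : T -> R) : f =1 g -> Ex P f = Ex P g.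
Proof. by move=> /funext ->. Qed.

Lemma Ex_indic (A : set T) : measurable A -> Ex P \1_A = Pr P A.
Proof. by move=> mA; rewrite /Ex integral_indic // setIT. Qed.

Lemma Ex_cst (c : R) : Ex P (fun _ => c) = c.
Proof.
have := @Rintegral_cst _ _ _ P setT measurableT c; rewrite /Ex /Rintegral => ->.
have P1 : fine (P setT) = 1 by rewrite probability_setT.
by rewrite P1 mulr1.
Qed.

Lemma Ex_sum (J : Type) (s : seq J) (F : J -> T -> R) :
  (forall j, P.-integrable setT (EFin \o F j)) ->
  Ex P (fun w => \sum_(j <- s) F j w) = \sum_(j <- s) Ex P (F j).
Proof.
move=> Fi; rewrite /Ex sum_fine => [|j _]; last exact: integrable_fin_num (Fi j).
rewrite -integral_sum //; congr fine; apply: eq_integral => w _.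
by rewrite sumEFin.
Qed.

Lemma ExZl (f : T -> R) (c : R) : P.-integrable setT (EFin \o f) ->
  Ex P (fun w => c * f w) = c * Ex P f.
Proof. exact: RintegralZl. Qed.

Lemma mul_indic_patch (f : T -> R) (A : set T) :
  (fun w => (f w * \1_A w)%:E) = (EFin \o f) \_ A.
Proof.
apply/funext => w; rewrite /patch indicE.
by case: (w \in A); rewrite ?mulr1 ?mulr0.
Qed.

Lemma integrable_mul_indic (f : T -> R) (A : set T) : measurable A ->
  P.-integrable setT (EFin \o f) ->
  P.-integrable setT (EFin \o (fun w => f w * \1_A w)).
Proof.
move=> mA fi; rewrite /comp mul_indic_patch.
by apply/(integrable_mkcond _ mA); apply: integrableS fi.
Qed.

Lemma Ex_mul_indic_null (f : T -> R) (A : set T) : measurable A ->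
  measurable_fun setT f -> Pr P A = 0 -> Ex P (fun w => f w * \1_A w) = 0.
Proof.
move=> mA mf PA0.
have PA : P A = 0%E by rewrite -[P A]fineK ?fin_num_measure // -/(Pr P A) PA0.
rewrite /Ex mul_indic_patch -integral_mkcond null_set_integral //.
exact/measurable_EFinP/measurable_funTS.
Qed.

Lemma indic_eq_nat (A : set T) w (b : bool) : (A w <-> b) -> \1_A w = b%:R :> R.
Proof.
rewrite indicE; case: b => Ab; first by rewrite mem_set //; apply/Ab.
by rewrite memNset // => /Ab.
Qed.

End Expectation.

Section CellExpectation.
Context d (T : measurableType d) (R : realType) (P : probability T R)
  (I : finType) (X : T -> bool) (N : T -> I).
Hypothesis mX : measurable (evX X true).
Hypothesis mN : forall n, measurable (evN N n).

Lemma indic_evN w n : \1_(evN N n) w = (N w == n)%:R :> R.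
Proof. by apply: indic_eq_nat; rewrite /evN /=; split => [->|/eqP]. Qed.

Lemma indic_evX w x : \1_(evX X x) w = (X w == x)%:R :> R.
Proof. by apply: indic_eq_nat; rewrite /evX /=; split => [->|/eqP]. Qed.

Lemma indic_evXN w x n :
  \1_(evXN X N x n) w = ((X w == x) && (N w == n))%:R :> R.
Proof.
apply: indic_eq_nat; rewrite /evXN /=; split => [[-> ->]|/andP[/eqP -> /eqP ->]] //.
by rewrite !eqxx.
Qed.

Lemma measurable_evX x : measurable (evX X x).
Proof.
case: x => //; rewrite (_ : evX X false = ~` evX X true); first exact: measurableC.
apply/funext => w; apply/propext; rewrite /evX /=.
by case: (X w); split.
Qed.

Lemma measurable_evXN x n : measurable (evXN X N x n).
Proof.
rewrite (_ : evXN X N x n = evX X x `&` evN N n) //.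
exact: measurableI (measurable_evX x) (mN n).
Qed.

Lemma Xr_indic w : Xr R X w = \1_(evX X true) w.
Proof. by rewrite indic_evX eqb_id. Qed.

Lemma Xr_indicN w n : Xr R X w * \1_(evN N n) w = \1_(evXN X N true n) w.
Proof. by rewrite Xr_indic indic_evX indic_evN indic_evXN -natrM mulnb. Qed.

Definition cellE (f : T -> R) x n := Ex P (fun w => f w * \1_(evXN X N x n) w).

Lemma cellE1 x n : cellE (fun _ => 1) x n = Pr P (evXN X N x n).
Proof.
rewrite /cellE (@eq_Ex _ _ _ P _ \1_(evXN X N x n)) => [|w]; last exact: mul1r.
exact/Ex_indic/measurable_evXN.
Qed.

Variables (f : T -> R) (F : T -> R).
Hypothesis fi : P.-integrable setT (EFin \o f).

Lemma Ex_cells (G : bool -> I -> R) : F =1 (fun w => f w * G (X w) (N w)) ->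
  Ex P F = \sum_x \sum_n G x n * cellE f x n.
Proof.
move=> FE.
have FE_cells w : F w =
    \sum_(c : bool * I) G c.1 c.2 * (f w * \1_(evXN X N c.1 c.2) w).
  rewrite FE (bigD1 (X w, N w)) //= indic_evXN !eqxx mulr1 big1 ?addr0 1?mulrC //.
  move=> [x n] /= cxn; rewrite indic_evXN.
  have [xE|_] := eqVneq (X w) x; have [nE|_] := eqVneq (N w) n; rewrite ?mulr0 //.
  by move: cxn; rewrite -xE -nE eqxx.
rewrite (eq_Ex P FE_cells) Ex_sum => [|c]; last first.
  have ci := integrable_mul_indic (measurable_evXN c.1 c.2) fi.
  by apply: eq_integrable (integrableZl measurableT (G c.1 c.2) ci).
rewrite pair_big; apply: eq_bigr => -[x n] _.
exact/ExZl/integrable_mul_indic/fi/measurable_evXN.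
Qed.

Lemma Ex_funN (g : I -> R) : F =1 (fun w => f w * g (N w)) ->
  Ex P F = \sum_n g n * (cellE f true n + cellE f false n).
Proof.
move=> FE; rewrite (@Ex_cells (fun _ n => g n)) // big_bool -big_split.
by apply: eq_bigr => n _; rewrite mulrDr.
Qed.

Lemma Ex_funX (h : bool -> R) : F =1 (fun w => f w * h (X w)) ->
  Ex P F = \sum_x h x * \sum_n cellE f x n.
Proof.
move=> FE; rewrite (@Ex_cells (fun x _ => h x)) //.
by apply: eq_bigr => x _; rewrite mulr_sumr.
Qed.

Lemma Ex_indicN k : F =1 (fun w => f w * \1_(evN N k) w) ->
  Ex P F = cellE f true k + cellE f false k.
Proof.
move=> FE; rewrite (@Ex_funN (fun n => (n == k)%:R)) => [|w]; last first.
  by rewrite FE indic_evN.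
rewrite (bigD1 k) //= eqxx mul1r big1 ?addr0 // => n /negbTE ->.
exact: mul0r.
Qed.

Lemma Ex_indicX_funN x (g : I -> R) :
  F =1 (fun w => f w * g (N w) * \1_(evX X x) w) ->
  Ex P F = \sum_n g n * cellE f x n.
Proof.
move=> FE; rewrite (@Ex_cells (fun y n => (y == x)%:R * g n)) => [|w]; last first.
  by rewrite FE indic_evX -mulrA (mulrC (g _)).
have other y : y != x -> \sum_n (y == x)%:R * g n * cellE f y n = 0.
  by move=> /negbTE yx; apply: big1 => n _; rewrite yx !mul0r.
have self : \sum_n (x == x)%:R * g n * cellE f x n = \sum_n g n * cellE f x n.
  by apply: eq_bigr => n _; rewrite eqxx mul1r.
by rewrite big_bool /=; case: x {FE} other self => other ->; rewrite other ?addr0 ?add0r.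
Qed.

End CellExpectation.

Section CellForm.
Context d (T : measurableType d) (R : realType) (P : probability T R)
  (I : finType) (X : T -> bool) (Y : T -> R) (N : T -> I).
Hypothesis mX : measurable (evX X true).
Hypothesis mN : forall n, measurable (evN N n).
Hypothesis mY : measurable_fun setT Y.
Hypothesis iY : P.-integrable setT (EFin \o Y).

Let q x n := Pr P (evXN X N x n).
Let m x n := cellE P X N Y x n.
Let i1 : P.-integrable setT (EFin \o (fun _ : T => 1 : R)).
Proof. exact: finite_measure_integrable_cst. Qed.

Lemma cell_prob_ge0 x n : 0 <= q x n.
Proof. by rewrite /q /Pr fine_ge0 // measure_ge0. Qed.

Lemma cell_mass_eq0 x n : q x n = 0 -> m x n = 0.
Proof. by move=> q0; apply: Ex_mul_indic_null => //; exact: measurable_evXN. Qed.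

Lemma cell_prob_sum1 : groupQ q true + groupQ q false = 1.
Proof.
rewrite -(Ex_cst P 1) (Ex_funX mX mN i1 (h := fun _ => 1)) => [|w];
  last by rewrite mulr1.
rewrite big_bool /= !mul1r.
by congr (_ + _); apply: eq_bigr => n _; rewrite cellE1.
Qed.

Lemma Pr_evN_cells k : Pr P (evN N k) = cellP q k.
Proof.
rewrite -Ex_indic // (Ex_indicN mX mN i1 (k := k)) => [|w]; last by rewrite mul1r.
by rewrite !cellE1.
Qed.

Lemma X_cells k : X_ P X N k = cellX q k.
Proof.
rewrite /X_ /condE Pr_evN_cells; congr (_ / _).
by rewrite (eq_Ex P (Xr_indicN R X N ^~ k)) Ex_indic //; exact: measurable_evXN.
Qed.

Lemma Pr_evX_cells x : Pr P (evX X x) = groupQ q x.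
Proof.
rewrite -Ex_indic; last exact: measurable_evX.
rewrite (Ex_indicX_funN mX mN i1 (x := x) (g := fun _ => 1)) => [|w];
  last by rewrite !mul1r.
by apply: eq_bigr => n _; rewrite mul1r cellE1.
Qed.

Lemma Ygrp_cells x : Ygrp P X Y x = groupM m x / groupQ q x.
Proof.
rewrite /Ygrp /condE Pr_evX_cells; congr (_ / _).
rewrite (Ex_indicX_funN mX mN iY (x := x) (g := fun _ => 1)) => [|w]; last by rewrite mulr1.
by apply: eq_bigr => n _; rewrite mul1r.
Qed.

Lemma Dgap_cells : Dgap P X Y = gapC q m.
Proof. by rewrite /Dgap !Ygrp_cells. Qed.

Lemma condCov_evN_cells k : condCov P Y (Xr R X) (evN N k) = covN q m k.
Proof.
rewrite /condCov -/(X_ P X N k) X_cells /condE Pr_evN_cells.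
have YXr_cell : (fun w => Y w * Xr R X w * \1_(evN N k) w)
    =1 (fun w => Y w * \1_(evXN X N true k) w).
  by move=> w; rewrite -mulrA Xr_indicN.
by rewrite (eq_Ex P YXr_cell)
  (Ex_indicN mX mN iY (k := k) (F := fun w => Y w * \1_(evN N k) w)).
Qed.

Lemma deltaB_cells : deltaB P X Y N = deltaBC q m.
Proof.
rewrite /deltaB (Ex_funN mX mN i1 (g := fun n => condCov P Y (Xr R X) (evN N n)))
  => [|w]; last by rewrite mul1r.
by apply: eq_bigr => n _; rewrite condCov_evN_cells !cellE1.
Qed.

Lemma condCov_evX_cells x : condCov P Y (XN P X N) (evX X x) = covX q m x.
Proof.
rewrite /condCov -/(Ygrp P X Y x) Ygrp_cells /condE Pr_evX_cells.
rewrite (Ex_indicX_funN mX mN iY (x := x) (g := X_ P X N)) //.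
rewrite (Ex_indicX_funN mX mN i1 (x := x) (g := X_ P X N)) => [|w]; last by rewrite mul1r.
by congr (_ / _ - _ * (_ / _)); apply: eq_bigr => n _; rewrite X_cells ?cellE1.
Qed.

Lemma deltaW_cells : deltaW P X Y N = deltaWC q m.
Proof.
rewrite /deltaW (Ex_funX mX mN i1 (h := fun x => condCov P Y (XN P X N) (evX X x)))
  => [|w]; last by rewrite mul1r.
apply: eq_bigr => x _; rewrite condCov_evX_cells; congr (_ * _).
by apply: eq_bigr => n _; rewrite cellE1.
Qed.

Lemma VarX_cells : Var P (Xr R X) = varXC q.
Proof.
have Xr_sq : (fun w => Xr R X w ^+ 2) =1 \1_(evX X true).
  by move=> w; rewrite Xr_indic indic_evX; case: (X w == true); rewrite ?expr1n ?expr0n.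
rewrite /Var (eq_Ex P Xr_sq) (eq_Ex P (Xr_indic R X)) Ex_indic //.
by rewrite Pr_evX_cells.
Qed.

Lemma VarXN_cells : Var P (XN P X N) = varXNC q.
Proof.
rewrite /Var (Ex_funN mX mN i1 (F := fun w => XN P X N w ^+ 2)
  (g := fun n => X_ P X N n ^+ 2)) => [|w]; last by rewrite mul1r.
rewrite (Ex_funN mX mN i1 (F := XN P X N) (g := X_ P X N)) => [|w]; last by rewrite mul1r.
by congr (_ - _ ^+ 2); apply: eq_bigr => n _; rewrite X_cells !cellE1.
Qed.

End CellForm.

Theorem proposition1 (d : measure_display) (T : measurableType d) (R : realType)
  (P : probability T R) (I : finType) (X : T -> bool) (Y : T -> R) (N : T -> I)
  (Ylo Yhi : R)
  (mX : measurable (evX X true))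
  (mN : forall n : I, measurable (evN N n))
  (mY : measurable_fun setT Y)
  (iY : P.-integrable setT (fun w => (Y w)%:E))
  (hex : exists n : I, 0 < p_ P N n /\ 0 < X_ P X N n /\ X_ P X N n < 1)
  (hlohi : Ylo <= Yhi)
  (hbnd : forall (x : bool) (n : I), 0 < Pr P (evXN X N x n) ->
            Ylo <= Ycell P X Y N x n <= Yhi) :
  Dgap P X Y = (deltaB P X Y N + deltaW P X Y N)
                 / ((1 - gammaR P X N) * Var P (Xr R X))
  /\ 0 <= gammaR P X N /\ gammaR P X N < 1
  /\ Num.sg (Dgap P X Y) = Num.sg (deltaB P X Y N + deltaW P X Y N).
Proof.
rewrite (Dgap_cells mX mN iY) (deltaB_cells mX mN iY) (deltaW_cells mX mN iY).
rewrite /gammaR (VarX_cells P mX mN) (VarXN_cells P mX mN).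
apply: cell_gap_ratio.
- exact: cell_prob_ge0.
- exact: (cell_mass_eq0 mX mN mY).
- exact: (cell_prob_sum1 P mX mN).
- by case: hex => n; rewrite /p_ (Pr_evN_cells P mX mN) (X_cells P mX mN); exists n.
Qed.
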